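(* Let $q=2^m$ and let $f\in\mathbb{F}_q[x]$ define a function $f:\mathbb{F}_q\to\mathbb{F}_q$. Let $X$ be the algebraic set of points $(x,y,z,t)$ in the affine space $\mathbb{A}^4(\overline{\mathbb{F}}_q)$ such that $P_f(x,y,z)=P_f(x,y,t)=0$, and let $V\subset\mathbb{A}^4(\overline{\mathbb{F}}_q)$ be the hypersurface defined by $$(x+y)(x+z)(x+t)(y+z)(y+t)(z+t)(x+y+z+t)=0.$$ Then $\delta(f)\le 4$ if and only if $X(\mathbb{F}_q)\subset V$, where $X(\mathbb{F}_q)$ denotes the set of $\mathbb{F}_q$-rational points of $X$.
   Context: The differential uniformity of $f:\mathbb{F}_q\to\mathbb{F}_q$ is $\delta(f)=\max_{\alpha\neq0,\beta\in\mathbb{F}_q}\#\{x\in\mathbb{F}_q : f(x+\alpha)+f(x)=\beta\}$. For a polynomial $f$, the polynomial $f(x)+f(y)+f(z)+f(x+y+z)$ is divisible by $(x+y)(x+z)(y+z)$, and $P_f(x,y,z)$ denotes the quotient polynomial $\frac{f(x)+f(y)+f(z)+f(x+y+z)}{(x+y)(x+z)(y+z)}$. *)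

From HB Require Import structures.
From mathcomp Require Import all_boot all_order all_algebra all_field.
From mathcomp Require Import mpoly.
Set Implicit Arguments. Unset Strict Implicit. Unset Printing Implicit Defensive.
Import GRing.Theory.
Local Open Scope ring_scope.

Definition i0 : 'I_3 := @Ordinal 3 0 isT.
Definition i1 : 'I_3 := @Ordinal 3 1 isT.
Definition i2 : 'I_3 := @Ordinal 3 2 isT.

Definition pcomp3 (F : fieldType) (f : {poly F}) (p : {mpoly F[3]}) : {mpoly F[3]} :=
  (map_poly (@mpolyC 3 F) f).[p].

Definition Pf_num (F : fieldType) (f : {poly F}) : {mpoly F[3]} :=
  pcomp3 f 'X_i0 + pcomp3 f 'X_i1 + pcomp3 f 'X_i2
  + pcomp3 f ('X_i0 + 'X_i1 + 'X_i2).

Definition Pf_den (F : fieldType) : {mpoly F[3]} :=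
  ('X_i0 + 'X_i1) * ('X_i0 + 'X_i2) * ('X_i1 + 'X_i2).

Definition eval3 (F : fieldType) (p : {mpoly F[3]}) (x y z : F) : F :=
  p.@[fun i : 'I_3 => [:: x; y; z]`_i].

Definition diff_unif (F : finFieldType) (f : {poly F}) : nat :=
  \max_(a : F | a != 0) \max_(b : F) #|[set x : F | (f.[x + a] + f.[x] == b)%R]|.

From HB Require Import structures.
From mathcomp Require Import all_boot all_order all_algebra all_field.
From mathcomp Require Import mpoly.
From mathcomp Require Import ring.
Set Implicit Arguments.
Unset Strict Implicit.
Unset Printing Implicit Defensive.
Import GRing.Theory.
Local Open Scope ring_scope.

(* In characteristic 2, w |-> w + a is an involution of
   D(a, b) = {w | f(w + a) + f(w) = b}, so D(a, b) is a union of pairs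
   {w, w + a}.  Evaluating P_f (x+y)(x+z)(y+z) = f(x) + f(y) + f(z) + f(x+y+z)
   at y = x + a shows that, for x in D(a, b) and w outside {x, x + a},
   P_f(x, x + a, w) = 0 exactly when w lies in D(a, b).  Hence a point of X
   outside V amounts to three distinct pairs {x, x + a}, {z, z + a}, {t, t + a}
   inside one D(a, b) with a <> 0, and these exist iff #D(a, b) > 4. *)

Section Char2.

Variable R : nzRingType.
Hypothesis pcharR2 : 2 \in [pchar R].

Lemma addr_eq0_pchar2 (u v : R) : (u + v == 0) = (u == v).
Proof. by rewrite addr_eq0 oppr_pchar2. Qed.

Lemma eq_addr_pchar2 (u v a : R) : (u + a == v) = (u == v + a).
Proof. by rewrite -subr_eq oppr_pchar2. Qed.

Lemma eq_addr_l (u a : R) : (u == u + a) = (a == 0).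
Proof. by rewrite -{1}[u]addr0 (inj_eq (addrI u)) eq_sym. Qed.

Lemma eq_addr_sym_pchar2 (u v a : R) : (u == v + a) = (v == u + a).
Proof. by rewrite -eq_addr_pchar2 eq_sym. Qed.

Lemma uniq_cosets (x a z t : R) :
  uniq [:: x; x + a; z; z + a; t; t + a] =
  [&& a != 0, z \notin [:: x; x + a] & t \notin [:: x; x + a; z; z + a]].
Proof.
rewrite /= !inE !negb_or !eq_addr_l !(inj_eq (addIr a)).
rewrite ![_ + a == _]eq_addr_pchar2 [x == z]eq_sym.
rewrite [x == z + a]eq_addr_sym_pchar2 [x == t + a]eq_addr_sym_pchar2.
rewrite [z == t + a]eq_addr_sym_pchar2 [x == t]eq_sym [z == t]eq_sym.
by do ![case: eqP => _].
Qed.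

Definition V_form (x y z t : R) : R :=
  (x + y) * (x + z) * (x + t) * (y + z) * (y + t) * (z + t) * (x + y + z + t).

End Char2.

Lemma V_form_cosets_neq0 (R : idomainType) (pcharR2 : 2 \in [pchar R])
  (x a z t : R) :
  (V_form x (x + a) z t != 0) = uniq [:: x; x + a; z; z + a; t; t + a].
Proof.
rewrite (uniq_cosets pcharR2) /V_form (addKr_pchar2 pcharR2).
rewrite !mulf_eq0 !negb_or !(addr_eq0_pchar2 pcharR2).
rewrite [x == z]eq_sym [x == t]eq_sym [x + a == z]eq_sym [x + a == t]eq_sym.
rewrite [z == t]eq_sym [a + z]addrC [z + a == t]eq_sym !andbT -!andbA.
by congr (_ && (_ && _)); apply: andbCA.
Qed.

Lemma meval_pcomp3 (F : fieldType) (f : {poly F}) (p : {mpoly F[3]}) v :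
  (pcomp3 f p).@[v] = f.[p.@[v]].
Proof.
rewrite /pcomp3 -horner_map; congr horner.
by rewrite -map_poly_comp; apply: map_poly_id => c _ /=; rewrite mevalC.
Qed.

Lemma eval3_Pf_mul_den (F : fieldType) (f : {poly F}) (P : {mpoly F[3]}) x y z :
  P * Pf_den F = Pf_num f ->
  eval3 P x y z * ((x + y) * (x + z) * (y + z))
  = f.[x] + f.[y] + f.[z] + f.[x + y + z].
Proof.
move=> /(congr1 (fun p => p.@[fun i : 'I_3 => [:: x; y; z]`_i])).
by rewrite /Pf_den /Pf_num !mevalM !mevalD !meval_pcomp3 !mevalD !mevalXU.
Qed.

Lemma exists_notin_seq (T : finType) (A : {set T}) (s : seq T) :
  (size s < #|A|)%N -> exists2 w, w \in A & w \notin s.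
Proof.
move=> s_lt_A; apply/exists_inP; apply: contraTT s_lt_A => /exists_inPn A_sub_s.
rewrite -leqNgt.
apply: leq_trans (card_size s); apply/subset_leq_card/subsetP => w /A_sub_s.
by rewrite negbK.
Qed.

Section DifferentialUniformity.

Variables (F : finFieldType) (f : {poly F}).

Definition diff_set (a b : F) := [set w : F | f.[w + a] + f.[w] == b].

Lemma diff_unif_leP n :
  reflect (forall a b, a != 0 -> (#|diff_set a b| <= n)%N) (diff_unif f <= n)%N.
Proof.
apply: (iffP idP) => [/bigmax_leqP le_n a b a0 | le_n].
  by move/bigmax_leqP: (le_n a a0); apply.
by apply/bigmax_leqP => a a0; apply/bigmax_leqP => b _; apply: le_n.
Qed.

Hypothesis pcharF2 : 2 \in [pchar F].

Lemma diff_set_addr a b w : w \in diff_set a b -> w + a \in diff_set a b.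
Proof. by rewrite !inE (addrK_pchar2 pcharF2) addrC. Qed.

Variable P : {mpoly F[3]}.
Hypothesis hP : P * Pf_den F = Pf_num f.

Lemma eval3_Pf_eq0 a b x w : a != 0 -> x \in diff_set a b ->
  w \notin [:: x; x + a] -> (eval3 P x (x + a) w == 0) = (w \in diff_set a b).
Proof.
move=> a0; rewrite !inE negb_or => /eqP x_in /andP[wx wxa].
have den_neq0 : (x + (x + a)) * (x + w) * (x + a + w) != 0.
  by rewrite (addKr_pchar2 pcharF2) !mulf_neq0 //
     (addr_eq0_pchar2 pcharF2) eq_sym.
rewrite -[LHS]orbF -(negbTE den_neq0) -mulf_eq0 (eval3_Pf_mul_den _ _ _ hP).
rewrite -x_in -[_ + _ == _ + _](addr_eq0_pchar2 pcharF2) (addKr_pchar2 pcharF2).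
by rewrite [a + w]addrC; congr (_ == _); ring.
Qed.

Lemma card_diff_set_ge6 a b x z t : x \in diff_set a b ->
  uniq [:: x; x + a; z; z + a; t; t + a] ->
  eval3 P x (x + a) z = 0 -> eval3 P x (x + a) t = 0 ->
  (6 <= #|diff_set a b|)%N.
Proof.
move=> x_in s_uniq Pz Pt.
rewrite -[6%N]/(size [:: x; x + a; z; z + a; t; t + a]) -(card_uniqP s_uniq).
move: (s_uniq); rewrite (uniq_cosets pcharF2) => /and3P[a0 zx].
rewrite !inE !negb_or => /and4P[tx txa _ _].
have z_in : z \in diff_set a b by rewrite -(eval3_Pf_eq0 a0 x_in zx) Pz.
have t_in : t \in diff_set a b.
  by rewrite -(eval3_Pf_eq0 a0 x_in) ?Pt // !inE negb_or tx txa.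
apply: subset_leq_card; apply/subsetP/allP.
by rewrite /= x_in z_in t_in !diff_set_addr.
Qed.

Lemma exists_coset_roots a b : a != 0 -> (4 < #|diff_set a b|)%N ->
  exists x z t, [/\ uniq [:: x; x + a; z; z + a; t; t + a],
                    eval3 P x (x + a) z = 0 & eval3 P x (x + a) t = 0].
Proof.
move=> a0 D_gt4.
have [x x_in _] : exists2 x, x \in diff_set a b & x \notin [::].
  by apply: exists_notin_seq; apply: leq_trans D_gt4.
have [z z_in zx] : exists2 z, z \in diff_set a b & z \notin [:: x; x + a].
  by apply: exists_notin_seq; apply: leq_trans D_gt4.
have [t t_in tx] :
    exists2 t, t \in diff_set a b & t \notin [:: x; x + a; z; z + a].
  exact: exists_notin_seq.
exists x, z, t; split; first by rewrite (uniq_cosets pcharF2) a0 zx tx.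
  by apply/eqP; rewrite (eval3_Pf_eq0 a0 x_in).
move: tx; rewrite !inE !negb_or => /and4P[tx txa _ _].
by apply/eqP; rewrite (eval3_Pf_eq0 a0 x_in) // !inE negb_or tx txa.
Qed.

End DifferentialUniformity.

Theorem theorem2p2 (m : nat) (F : finFieldType) (hF : #|F| = (2 ^ m)%N)
  (f : {poly F}) (P : {mpoly F[3]}) (hP : P * Pf_den F = Pf_num f) :
  (diff_unif f <= 4)%N <->
  (forall x y z t : F, eval3 P x y z = 0 -> eval3 P x y t = 0 ->
     (x + y) * (x + z) * (x + t) * (y + z) * (y + t) * (z + t) * (x + y + z + t) = 0).
Proof.
have pcharF2 : 2 \in [pchar F] by apply: (card_finPcharP hF).
split=> [le4 x y z t | V_roots].
  have [a ->] : exists a, y = x + a.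
    by exists (x + y); rewrite (addKr_pchar2 pcharF2).
  move=> Pz Pt; apply/eqP; apply: contraTT le4.
  rewrite (V_form_cosets_neq0 pcharF2) => s_uniq.
  have x_in : x \in diff_set f a (f.[x + a] + f.[x]) by rewrite inE.
  have D_ge6 := card_diff_set_ge6 pcharF2 hP x_in s_uniq Pz Pt.
  move: s_uniq; rewrite (uniq_cosets pcharF2) => /and3P[a0 _ _].
  by apply/negP => /diff_unif_leP/(_ a _ a0)/(leq_trans D_ge6).
apply/diff_unif_leP => a b a0; rewrite leqNgt; apply/negP.
move=> /(exists_coset_roots pcharF2 hP a0)[x [z [t [s_uniq Pz Pt]]]].
by move: s_uniq; rewrite -(V_form_cosets_neq0 pcharF2) /V_form V_roots ?eqxx.
Qed.
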